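(* Let $N\ge7$, $D=\frac{N-2}2$, let $1\le L\le N-1$ be an integer and $J=4L$. Let $q_0\in(0,\infty)$ be the unique number with $q_0^{-2D}+(q_0^2+1)^{-D}=1$. For $k\in\{1,\dots,L\}$ set $\iota_{4k-3}=\iota_{4k-2}=+1$, $\iota_{4k-1}=\iota_{4k}=-1$ and $z^*_{4k-3}=\frac12e_1+\frac{q_0}2e_{k+1}$, $z^*_{4k-2}=-\frac12e_1+\frac{q_0}2e_{k+1}$, $z^*_{4k-1}=\frac12e_1-\frac{q_0}2e_{k+1}$, $z^*_{4k}=-\frac12e_1-\frac{q_0}2e_{k+1}$, where $e_1,\dots,e_N$ is the standard basis of $\mathbb{R}^N$. Then this configuration is degenerate and $A^*$ has at least $L$ linearly independent kernel elements in $[0,\infty)^J$.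
   Context: $A^*_{ij}=\mathbf 1_{i\ne j}\kappa_0\kappa_\infty\frac{\iota_i\iota_j}{|z_i^*-z_j^*|^{N-2}}$ with fixed positive constants $\kappa_0,\kappa_\infty$. A configuration is degenerate if $A^*$ has a nonzero kernel element in $[0,\infty)^J$. *)

From HB Require Import structures.
From mathcomp Require Import all_boot all_order all_algebra.
From mathcomp Require Import all_classical all_reals all_analysis.
Set Implicit Arguments. Unset Strict Implicit. Unset Printing Implicit Defensive.
Import Order.TTheory GRing.Theory Num.Theory.
Local Open Scope ring_scope.

Definition enorm {R : realType} {N : nat} (x : 'rV[R]_N) : R :=
  Num.sqrt (\sum_(j < N) x 0 j ^+ 2).

(* Indices are 0-based: paper index 4k-3+r (k = 1..L, r = 0..3) is i = 4(k-1)+r,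
   so k-1 = i %/ 4 and r = i %% 4. *)
Definition iota_sign {R : realType} (i : nat) : R :=
  if (i %% 4 < 2)%N then 1 else -1.

(* z*_i = s1 * (1/2) e_1 + s2 * (q0/2) e_{k+1}; in 0-based coordinates e_1 is
   coordinate 0 and e_{k+1} is coordinate k = i %/ 4 + 1. *)
Definition zstar {R : realType} (N : nat) (q0 : R) (i : nat) : 'rV[R]_N :=
  \row_(j < N)
    ((if (nat_of_ord j == 0)%N then (if odd (i %% 4) then - (1/2) else 1/2) else 0) +
     (if (nat_of_ord j == i %/ 4 + 1)%N then (if (i %% 4 < 2)%N then q0 / 2 else - (q0 / 2))
      else 0)).

Definition Astar {R : realType} (N J : nat) (kappa0 kappainf : R)
  (iota : nat -> R) (z : nat -> 'rV[R]_N) : 'M[R]_J :=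
  \matrix_(i < J, j < J)
    (if i != j then
       kappa0 * kappainf * (iota i * iota j) / (enorm (z i - z j)) ^+ (N - 2)
     else 0).

Definition degenerate {R : realType} {J : nat} (A : 'M[R]_J) : Prop :=
  exists v : 'cV[R]_J, v != 0 /\ (forall i, 0 <= v i 0) /\ A *m v = 0.

(* The kernel vectors are the indicators of the L blocks {4k-3, ..., 4k}.
   Seen from a charge outside block k, the two charges +-1/2 e_1 + q0/2 e_(k+1)
   of block k are at the same distances as the two charges +-1/2 e_1 - q0/2 e_(k+1)
   of opposite sign, so block k contributes nothing to that row.  Seen from a
   charge inside block k, the other three charges are one of the same sign at
   distance 1 and two of opposite sign at distances q0 and sqrt(1 + q0^2); the row
   sum is therefore proportional to 1 - q0^-(N-2) - (1 + q0^2)^-((N-2)/2), which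
   is 0 by the choice of q0.  The block indicators have disjoint supports, so
   they are linearly independent. *)

From HB Require Import structures.
From mathcomp Require Import all_boot all_order all_algebra.
From mathcomp Require Import all_classical all_reals all_analysis.
From mathcomp Require Import zify ring.
Import Order.TTheory GRing.Theory Num.Theory.
Local Open Scope ring_scope.

Section BlockIndicator.
Variables (b L : nat).

Definition block_ind {R : pzRingType} : 'M[R]_(b * L, L) :=
  \matrix_(i, j) ((i %/ b)%N == j)%:R.

Lemma sum_block_ind {R : pzRingType} (F : nat -> R) (j : nat) : (j < L)%N ->
  \sum_(l < b * L) F l * ((l %/ b)%N == j)%:R = \sum_(r < b) F (b * j + r).
Proof.
move=> ltjL; rewrite -(big_mkord xpredT (fun l => F l * ((l %/ b)%N == j)%:R)).
rewrite mulnC big_nat_mul.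
under eq_big_nat => k _.
  rewrite (eq_big_nat _ _ (F2 := fun l => F l * (k == j)%:R)); last first.
    move=> l /andP[kb lb]; have b_gt0 : (0 < b)%N by lia.
    by congr (_ * (_ == _)%:R); apply/eqP; rewrite eqn_leq -ltnS ltn_divLR // leq_divRL // kb lb.
  rewrite -big_distrl /=; over.
rewrite big_mkord (bigD1 (Ordinal ltjL)) //= eqxx mulr1 [X in _ + X]big1 ?addr0; last first.
  by move=> k; rewrite -val_eqE /= => /negbTE ->; rewrite mulr0.
rewrite /= -{1}[(_ * b)%N]add0n big_addn big_mkord mulSn addnK.
by apply: eq_bigr => r _; rewrite addnC mulnC.
Qed.

Lemma block_ind_ge0 {R : numDomainType} i j : 0 <= (block_ind : 'M[R]_(b * L, L)) i j.
Proof. by rewrite mxE ler0n. Qed.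

Hypothesis b_gt0 : (0 < b)%N.

Definition block_head (j : 'I_L) : 'I_(b * L) :=
  Ordinal (etrans (ltn_pmul2l b_gt0) (ltn_ord j)).

Lemma block_ind_head {R : pzRingType} (j k : 'I_L) :
  (block_ind : 'M[R]_(b * L, L)) (block_head j) k = (j == k)%:R.
Proof. by rewrite mxE /= mulKn. Qed.

Lemma rank_block_ind {F : fieldType} : \rank (block_ind : 'M[F]_(b * L, L)) = L.
Proof.
apply/eqP; rewrite eqn_leq rank_leq_col /= -{1}(mxrank1 F L).
have -> : 1%:M = rowsub block_head (block_ind : 'M[F]_(b * L, L)).
  by apply/matrixP => j k; rewrite [RHS]mxE block_ind_head mxE.
exact/mxrankS/rowsub_sub.
Qed.

Lemma col_block_ind_neq0 {R : nzRingType} (j : 'I_L) :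
  col j (block_ind : 'M[R]_(b * L, L)) != 0.
Proof.
apply/eqP => /matrixP/(_ (block_head j) 0).
by rewrite [LHS]mxE block_ind_head mxE eqxx; apply/eqP/oner_neq0.
Qed.

End BlockIndicator.

Lemma sumr_ord4 {R : nmodType} (F : nat -> R) :
  \sum_(r < 4) F r = F 0%N + F 1%N + F 2%N + F 3%N.
Proof. by rewrite !big_ord_recr big_ord0 /= add0r. Qed.

Lemma sum_sqr_axes_sub {R : comNzRingType} (n p p' : nat) (x y x' y' : R) :
  (0 < p < n)%N -> (0 < p' < n)%N ->
  \sum_(c < n) ((if (c == 0 :> nat)%N then x else 0) + (if (c == p :> nat)%N then y else 0)
    - ((if (c == 0 :> nat)%N then x' else 0) + (if (c == p' :> nat)%N then y' else 0))) ^+ 2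
  = (x - x') ^+ 2 + y ^+ 2 + y' ^+ 2 - (p == p')%:R * (2 * y * y').
Proof.
move=> /andP[p_gt0 ltpn] /andP[p'_gt0 ltp'n].
have expand (c : nat) : ((if (c == 0)%N then x else 0) + (if c == p then y else 0)
    - ((if (c == 0)%N then x' else 0) + (if c == p' then y' else 0))) ^+ 2 =
    (if (c == 0)%N then (x - x') ^+ 2 else 0)
    + (if c == p then y ^+ 2 - (p == p')%:R * (2 * y * y') else 0)
    + (if c == p' then y' ^+ 2 else 0).
  have [-> | c_neq0] := eqVneq c 0%N; first by rewrite !ltn_eqF //; ring.
  have [-> | c_neqp] := eqVneq c p; last by case: (c == p'); ring.
  have [_ | _] := eqVneq p p'; rewrite ?mulr1n ?mulr0n; ring.
have sum_at (q : nat) (a : R) :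
    (q < n)%N -> \sum_(c < n) (if (c == q :> nat)%N then a else 0) = a.
  by move=> ltqn; rewrite -big_mkcond big_ord1_eq ltqn.
under eq_bigr do rewrite expand.
by rewrite !big_split /= !sum_at ?(ltn_trans p_gt0 ltpn) // addrA addrAC.
Qed.

Lemma powR_balanceE {R : realType} (n : nat) (q : R) : 0 < q ->
  q `^ (- (2 * ((n%:R : R) / 2))) + (q ^+ 2 + 1) `^ (- ((n%:R : R) / 2)) =
  (q ^+ n)^-1 + (Num.sqrt (1 + q ^+ 2) ^+ n)^-1.
Proof.
move=> q_gt0; rewrite !powRN (mulrC 2) divfK ?pnatr_eq0 // (mulrC n%:R) powRrM.
rewrite powR12_sqrt ?addr_ge0 ?sqr_ge0 // (addrC _ 1).
by rewrite (powR_mulrn _ (sqrtr_ge0 _)) (powR_mulrn _ (ltW q_gt0)).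
Qed.

Section Configuration.
Variables (R : realType) (N : nat) (q0 : R).

Definition zstar_x (r : nat) : R := if odd r then - (1 / 2) else 1 / 2.
Definition zstar_y (r : nat) : R := if (r < 2)%N then q0 / 2 else - (q0 / 2).

Lemma zstar_blockE (k r : nat) : (r < 4)%N ->
  zstar N q0 (4 * k + r) = \row_(c < N)
    ((if (c == 0 :> nat)%N then zstar_x r else 0) +
     (if (c == k.+1 :> nat)%N then zstar_y r else 0)).
Proof.
move=> ltr4; have mod4 : ((4 * k + r) %% 4 = r)%N by lia.
have div4 : ((4 * k + r) %/ 4 = k)%N by lia.
by apply/rowP => c; rewrite !mxE addn1 mod4 div4.
Qed.

Lemma iota_sign_block (k r : nat) : (r < 4)%N ->
  iota_sign (4 * k + r) = if (r < 2)%N then 1 else -1 :> R.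
Proof. by move=> ltr4; rewrite /iota_sign mulnC modnMDl modn_small. Qed.

Lemma enorm_zstar_sub (k j s r : nat) :
  (k.+1 < N)%N -> (j.+1 < N)%N -> (s < 4)%N -> (r < 4)%N ->
  enorm (zstar N q0 (4 * k + s) - zstar N q0 (4 * j + r)) =
  Num.sqrt ((zstar_x s - zstar_x r) ^+ 2 +
    if k == j then (zstar_y s - zstar_y r) ^+ 2 else zstar_y s ^+ 2 + zstar_y r ^+ 2).
Proof.
move=> ltkN ltjN lts4 ltr4; rewrite /enorm !zstar_blockE //.
under eq_bigr do rewrite !mxE.
rewrite sum_sqr_axes_sub; [|lia|lia].
by rewrite eqSS; case: eqP => _; rewrite ?mulr1n ?mulr0n; congr Num.sqrt; ring.
Qed.

Lemma enorm_zstar_sub_block (k s r : nat) :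
  (k.+1 < N)%N -> (s < 4)%N -> (r < 4)%N ->
  enorm (zstar N q0 (4 * k + s) - zstar N q0 (4 * k + r)) =
  Num.sqrt ((odd s != odd r)%:R + ((s < 2)%N != (r < 2)%N)%:R * q0 ^+ 2).
Proof.
move=> ltkN lts4 ltr4; rewrite enorm_zstar_sub // eqxx /zstar_x /zstar_y.
by congr Num.sqrt; case: odd; case: odd; case: (s < 2)%N; case: (r < 2)%N;
  rewrite /= ?mulr1n ?mulr0n; field.
Qed.

Definition interaction (i l : nat) : R :=
  if i != l then iota_sign i * iota_sign l / enorm (zstar N q0 i - zstar N q0 l) ^+ (N - 2)
  else 0.

Lemma Astar_interaction (J : nat) (kappa0 kappainf : R) (i l : 'I_J) :
  Astar J kappa0 kappainf iota_sign (zstar N q0) i l = kappa0 * kappainf * interaction i l.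
Proof.
rewrite mxE /interaction; case: (i =P l) => [-> | /eqP neq_il]; first by rewrite !eqxx mulr0.
by rewrite neq_il /= [RHS]mulrA.
Qed.

Lemma interaction_flip (k j s r : nat) : k != j -> (s < 4)%N -> (r < 2)%N ->
  (k.+1 < N)%N -> (j.+1 < N)%N ->
  interaction (4 * k + s) (4 * j + r.+2) = - interaction (4 * k + s) (4 * j + r).
Proof.
move=> neq_kj lts4 ltr2 ltkN ltjN.
have ltr4 : (r < 4)%N by lia.
have ltr2_4 : (r.+2 < 4)%N by lia.
rewrite /interaction !ifT; [|lia|lia].
rewrite !enorm_zstar_sub // (negbTE neq_kj) !iota_sign_block //.
case: r ltr2 {ltr4 ltr2_4} => [|[|]] // _; rewrite /zstar_y /= sqrrN; ring.
Qed.

Lemma interaction_block_other (k j s : nat) : k != j -> (s < 4)%N ->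
  (k.+1 < N)%N -> (j.+1 < N)%N ->
  \sum_(r < 4) interaction (4 * k + s) (4 * j + r) = 0.
Proof.
move=> neq_kj lts4 ltkN ltjN.
rewrite (sumr_ord4 (fun r => interaction _ (4 * j + r))).
by rewrite (interaction_flip k j s 0) // (interaction_flip k j s 1) //; ring.
Qed.

Hypothesis q0_gt0 : 0 < q0.
Hypothesis q0_balance :
  (q0 ^+ (N - 2))^-1 + (Num.sqrt (1 + q0 ^+ 2) ^+ (N - 2))^-1 = 1.

Lemma interaction_block_self (k s : nat) : (k.+1 < N)%N -> (s < 4)%N ->
  \sum_(r < 4) interaction (4 * k + s) (4 * k + r) = 0.
Proof.
move=> ltkN lts4.
have balance : (q0 ^+ (N - 2))^-1 = 1 - (Num.sqrt (1 + q0 ^+ 2) ^+ (N - 2))^-1.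
  by apply/esym/eqP; rewrite subr_eq q0_balance.
have sqrt_q0 : Num.sqrt (q0 ^+ 2) = q0 by rewrite sqrtr_sqr gtr0_norm.
rewrite (sumr_ord4 (fun r => interaction _ (4 * k + r))) /interaction !eqn_add2l.
rewrite !iota_sign_block // !enorm_zstar_sub_block //.
case: s lts4 => [|[|[|[|]]]] // _ /=;
  rewrite ?mul0r ?mul1r ?addr0 ?add0r sqrtr1 expr1n invr1 sqrt_q0 balance; ring.
Qed.

Lemma interaction_block_sum (i j : nat) : ((i %/ 4).+1 < N)%N -> (j.+1 < N)%N ->
  \sum_(r < 4) interaction i (4 * j + r) = 0.
Proof.
move=> ltiN ltjN; rewrite (divn_eq i 4) mulnC.
have ltm4 : (i %% 4 < 4)%N by rewrite ltn_pmod.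
have [<- | neq_ij] := eqVneq (i %/ 4)%N j.
  exact: interaction_block_self.
exact: interaction_block_other.
Qed.

Lemma Astar_mul_block_ind (L : nat) (kappa0 kappainf : R) : (L < N)%N ->
  Astar (4 * L) kappa0 kappainf iota_sign (zstar N q0) *m block_ind 4 L = 0.
Proof.
move=> ltLN; apply/matrixP => i j; rewrite [LHS]mxE [RHS]mxE.
under eq_bigr do rewrite Astar_interaction mxE -mulrA.
rewrite -big_distrr /= sum_block_ind // interaction_block_sum ?mulr0 //.
  by have := ltn_ord i; lia.
by have := ltn_ord j; lia.
Qed.

End Configuration.

Theorem lemma4p10 (R : realType) (N L : nat) (kappa0 kappainf q0 : R) :
  (7 <= N)%N -> (1 <= L)%N -> (L <= N - 1)%N ->
  0 < kappa0 -> 0 < kappainf ->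
  0 < q0 ->
  q0 `^ (- (2 * (((N - 2)%:R : R) / 2))) +
    (q0 ^+ 2 + 1) `^ (- (((N - 2)%:R : R) / 2)) = 1 ->
  let A := Astar (4 * L) kappa0 kappainf (@iota_sign R) (zstar N q0) in
  degenerate A /\
  exists V : 'M[R]_(4 * L, L),
    \rank V = L /\ (forall i j, 0 <= V i j) /\ A *m V = 0.
Proof.
move=> _ L_gt0 leLN _ _ q0_gt0; rewrite powR_balanceE // => q0_balance A.
have AV : A *m block_ind 4 L = 0 by apply: Astar_mul_block_ind => //; lia.
split.
  exists (col (Ordinal L_gt0) (block_ind 4 L)); split; first exact: col_block_ind_neq0.
  by split=> [i|]; [rewrite mxE block_ind_ge0 | rewrite colE mulmxA AV mul0mx].
exists (block_ind 4 L); split; first exact: rank_block_ind.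
by split; [exact: block_ind_ge0 | exact: AV].
Qed.
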